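(* Let $\ell\in\mathbb{F}$ and $\lambda\in\Lambda$, and let $(W,Y_W)$ be a module for the vertex algebra $L_{\widehat{\mathfrak h}}(\ell,0,\lambda)$. Then $W$ is a restricted $\widehat{\mathfrak h}$-module of level $\ell$, where $u(n)$ acts as the coefficient of $x^{-n-1}$ in $Y_W(\bar u,x)$, with $\bar u$ the image of $u(-1)\mathbf 1$ in $L_{\widehat{\mathfrak h}}(\ell,0,\lambda)$. Moreover, for every $u\in\mathfrak h$: <ol> <li>$u(n)$ acts as $0$ on $W$ for all $n\in p\mathbb{Z}$;</li> <li>$u(n)^p$ acts as $0$ on $W$ for all $n\in\mathbb{Z}$ with $n\neq-1$;</li> <li>$u(-1)^p$ acts on $W$ as the scalar $\lambda(u(-1))^p$.</li> </ol>
   Context: Let $p$ be a prime and $\mathbb{F}$ a field of characteristic $p$. Integers, and binomial coefficients $\binom{n}{k}=\frac{n(n-1)\cdots(n-k+1)}{k!}$ for $n\in\mathbb{Z}$, $k\in\mathbb{N}$, are viewed as elements of the prime subfield of $\mathbb{F}$. We write $\mathbb{Z}_+$ for the positive integers. <b>Formal calculus.</b> For every $n\in\mathbb{Z}$ set $(x+y)^n=\sum_{k\ge0}\binom{n}{k}x^{n-k}y^k$, and let $\delta(x)=\sum_{n\in\mathbb{Z}}x^n$. <b>Vertex algebras.</b> A vertex algebra over $\mathbb{F}$ is a vector space $V$ with a vector $\mathbf 1$ and a linear map $$Y(\cdot,x):V\to(\mathrm{End}\,V)[[x,x^{-1}]],\qquad v\mapsto Y(v,x)=\sum_{n\in\mathbb{Z}}v_nx^{-n-1},$$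 satisfying the following conditions for all $u,v\in V$: <ul> <li>$u_nv=0$ for $n\gg0$;</li> <li>$Y(\mathbf 1,x)=\mathrm{id}_V$;</li> <li>$Y(v,x)\mathbf 1\in V[[x]]$ and its constant term is $v$;</li> <li>the Jacobi identity $$x_0^{-1}\delta\!\left(\tfrac{x_1-x_2}{x_0}\right)Y(u,x_1)Y(v,x_2)-x_0^{-1}\delta\!\left(\tfrac{x_2-x_1}{-x_0}\right)Y(v,x_2)Y(u,x_1)=x_2^{-1}\delta\!\left(\tfrac{x_1-x_0}{x_2}\right)Y(Y(u,x_0)v,x_2).$$</li> </ul> A $V$-module is a vector space $W$ with a linear map $Y_W(\cdot,x):V\to(\mathrm{End}\,W)[[x,x^{-1}]]$ satisfying truncation ($u_nw=0$ for $n\gg0$), $Y_W(\mathbf 1,x)=\mathrm{id}_W$, and the same Jacobi identity with $Y_W$ in place of $Y$ in the three products of vertex operators. <b>Heisenberg setup.</b> Let $\mathfrak h$ be a finite-dimensional $\mathbb{F}$-vector space with a non-degenerate symmetric bilinear form $\langle\cdot,\cdot\rangle$. The affine Lie algebra is $\widehat{\mathfrak h}=\mathfrak h\otimes\mathbb{F}[t,t^{-1}]\oplus\mathbb{F}\mathbf k$, where $\mathbf k$ is central and, writing $u(m)=u\otimes t^m$, $$[u(m),v(n)]=m\,\delta_{m+n,0}\langle u,v\rangle\mathbf k.$$ Set $\widehat{\mathfrak h}_+=\bigoplus_{n>0}\mathfrak h\otimes t^{-n}$ and $\widehat{\mathfrak h}_-=\bigoplus_{n>0}\mathfrak h\otimes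 t^{n}$. For a linear functional $\lambda\in(\widehat{\mathfrak h}_+)^*$, write $\lambda_n(u)=\lambda(u(-n))$ for $u\in\mathfrak h$, $n\in\mathbb{Z}_+$. <b>Restricted modules and level.</b> An $\widehat{\mathfrak h}$-module $W$ is restricted if for all $u\in\mathfrak h$ and $w\in W$ we have $u(n)w=0$ for $n\gg0$. It has level $\ell\in\mathbb{F}$ if $\mathbf k$ acts as the scalar $\ell$. <b>The vertex algebra $V_{\widehat{\mathfrak h}}(\ell,0)$.</b> For $\ell\in\mathbb{F}$, let $$V_{\widehat{\mathfrak h}}(\ell,0)=U(\widehat{\mathfrak h})\otimes_{U(\widehat{\mathfrak h}_-\oplus\mathfrak h\oplus\mathbb{F}\mathbf k)}\mathbb{F}_\ell,$$ where $\widehat{\mathfrak h}_-$ and $\mathfrak h=\mathfrak h\otimes t^0$ act on $\mathbb{F}_\ell=\mathbb{F}$ by $0$ and $\mathbf k$ acts by $\ell$. Set $\mathbf 1=1\otimes1$ and identify $u\in\mathfrak h$ with $u(-1)\mathbf 1$. Then $V_{\widehat{\mathfrak h}}(\ell,0)$ is a vertex algebra with vacuum $\mathbf 1$, uniquely determined by $Y(u,x)=\sum_{n\in\mathbb{Z}}u(n)x^{-n-1}$ for $u\in\mathfrak h$. <b>The quotients $L_{\widehat{\mathfrak h}}(\ell,0,\lambda)$.</b> For $\lambda\in(\widehat{\mathfrak h}_+)^*$, let $J(\ell,\lambda)$ be the $\widehat{\mathfrak h}$-submodule of $V_{\widehat{\mathfrak h}}(\ell,0)$ generated by the vectors <ul>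 <li>$(u(-m)^p-\lambda_m(u)^p)\mathbf 1$ for $u\in\mathfrak h$, $m\in\mathbb{Z}_+$;</li> <li>$(u(-n)-\lambda_n(u))\mathbf 1$ for $u\in\mathfrak h$, $n\in p\mathbb{Z}_+$.</li> </ul> Put $L_{\widehat{\mathfrak h}}(\ell,0,\lambda)=V_{\widehat{\mathfrak h}}(\ell,0)/J(\ell,\lambda)$, and $$\Lambda=\{\lambda\in(\widehat{\mathfrak h}_+)^*:\ \lambda(u(-n))=0\ \text{for all }u\in\mathfrak h,\ n\ge2\}.$$ For $\lambda\in\Lambda$, $J(\ell,\lambda)$ is an ideal, so $L_{\widehat{\mathfrak h}}(\ell,0,\lambda)$ is a quotient vertex algebra. *)

From HB Require Import structures.
From mathcomp Require Import all_boot all_order all_algebra.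
Set Implicit Arguments. Unset Strict Implicit. Unset Printing Implicit Defensive.
Import Order.TTheory GRing.Theory Num.Theory.
Local Open Scope ring_scope.

(* Binomial coefficient binom(m, i) = m(m-1)...(m-i+1)/i! for m : int. *)
Definition zbinom (m : int) (i : nat) : int :=
  match m with
  | Posz n => ('C(n, i))%:Z
  | Negz n => (-1) ^+ i * ('C(n + i, i))%:Z   (* Negz n = -(n+1) *)
  end.

(* A "vertex operator" map v |-> Y(v,x) = sum_n v_n x^{-n-1} is encoded by its
   modes: Y v n w = v_n w. *)

Definition va_linear (F : fieldType) (V W : lmodType F)
  (Y : V -> int -> W -> W) : Prop :=
  (forall (a : F) (u v : V) (n : int) (w : W),
      Y (a *: u + v) n w = a *: Y u n w + Y v n w) /\
  (forall (u : V) (n : int) (a : F) (w w' : W),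
      Y u n (a *: w + w') = a *: Y u n w + Y u n w').

Definition va_truncation (F : fieldType) (V W : lmodType F)
  (Y : V -> int -> W -> W) : Prop :=
  forall (u : V) (w : W), exists N : int, forall n : int, N <= n -> Y u n w = 0.

Definition va_vacuum (F : fieldType) (V W : lmodType F) (vac : V)
  (Y : V -> int -> W -> W) : Prop :=
  forall (n : int) (w : W), Y vac n w = if n == -1 then w else 0.

Definition va_creation (F : fieldType) (V : lmodType F) (vac : V)
  (Y : V -> int -> V -> V) : Prop :=
  forall v : V, Y v (-1) vac = v /\ (forall n : int, 0 <= n -> Y v n vac = 0).

(* The Jacobi identity, coefficient of x0^{-k-1} x1^{-m-1} x2^{-n-1}
   (all three sums are finite by truncation; we sum over i < M for all large M):
   sum_i binom(m,i) (u_{k+i} v)_{m+n-i} w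
     = sum_i (-1)^i binom(k,i) (u_{m+k-i} v_{n+i} w - (-1)^k v_{n+k-i} u_{m+i} w). *)
Definition jacobi (F : fieldType) (V W : lmodType F)
  (YV : V -> int -> V -> V) (Y : V -> int -> W -> W) : Prop :=
  forall (u v : V) (w : W) (m n k : int), exists N : nat, forall M : nat, (N <= M)%N ->
    \sum_(i < M) (zbinom m i)%:~R *: Y (YV u (k + (i : nat)%:Z) v) (m + n - (i : nat)%:Z) w
    = \sum_(i < M) ((-1) ^+ i * (zbinom k i)%:~R : F) *:
        (Y u (m + k - (i : nat)%:Z) (Y v (n + (i : nat)%:Z) w)
         - ((-1) ^ k : F) *: Y v (n + k - (i : nat)%:Z) (Y u (m + (i : nat)%:Z) w)).

Definition is_vertex_algebra (F : fieldType) (V : lmodType F) (vac : V)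
  (Y : V -> int -> V -> V) : Prop :=
  [/\ va_linear Y, va_truncation Y, va_vacuum vac Y, va_creation vac Y & jacobi Y Y].

Definition is_va_module (F : fieldType) (V W : lmodType F) (vac : V)
  (Y : V -> int -> V -> V) (YW : V -> int -> W -> W) : Prop :=
  [/\ va_linear YW, va_truncation YW, va_vacuum vac YW & jacobi Y YW].

Definition nondeg_symform (F : fieldType) (h : vectType F) (form : h -> h -> F) : Prop :=
  [/\ (forall (a : F) (u v w : h), form (a *: u + v) w = a * form u w + form v w),
      (forall u v : h, form u v = form v u) &
      (forall u : h, (forall v : h, form u v = 0) -> u = 0)].

(* An hhat-module of level ell on M: act u n is the action of u(n) = u ⊗ t^n,
   and k acts as ell. *)
Definition heis_module (F : fieldType) (h : vectType F) (form : h -> h -> F) (ell : F)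
  (M : lmodType F) (act : h -> int -> M -> M) : Prop :=
  [/\ (forall (a : F) (u v : h) (n : int) (w : M),
          act (a *: u + v) n w = a *: act u n w + act v n w),
      (forall (u : h) (n : int) (a : F) (w w' : M),
          act u n (a *: w + w') = a *: act u n w + act u n w') &
      (forall (u v : h) (m n : int) (w : M),
          act u m (act v n w) - act v n (act u m w)
          = (if m + n == 0 then (m%:~R * form u v * ell) else 0) *: w)].

Definition restricted (F : fieldType) (h : vectType F) (M : lmodType F)
  (act : h -> int -> M -> M) : Prop :=
  forall (u : h) (w : M), exists N : int, forall n : int, N <= n -> act u n w = 0.

(* w is annihilated by hhat_- (= h ⊗ t^n, n > 0) and by h ⊗ t^0 *)
Definition vacuum_like (F : fieldType) (h : vectType F) (M : lmodType F)
  (act : h -> int -> M -> M) (w : M) : Prop :=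
  forall (u : h) (n : int), 0 <= n -> act u n w = 0.

(* Universal property of the induced module U(hhat) ⊗_{U(hhat_- + h + F k)} F_ell,
   generated by vac. *)
Definition induced_universal (F : fieldType) (h : vectType F) (form : h -> h -> F)
  (ell : F) (V : lmodType F) (act : h -> int -> V -> V) (vac : V) : Prop :=
  forall (M : lmodType F) (rho : h -> int -> M -> M) (w : M),
    heis_module form ell rho -> vacuum_like rho w ->
    exists f : V -> M,
      (let P := fun g : V -> M =>
         [/\ (forall (a : F) (x y : V), g (a *: x + y) = a *: g x + g y),
             g vac = w &
             (forall (u : h) (n : int) (x : V), g (act u n x) = rho u n (g x))] in
       P f /\ forall g : V -> M, P g -> forall x : V, g x = f x).

(* (V, vac, Y, iota) is the vertex algebra V_hhat(ell,0), with iota u = u(-1)1 and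
   Y(iota u, x) = sum_n u(n) x^{-n-1}. *)
Definition is_heisenberg_VA (F : fieldType) (h : vectType F) (form : h -> h -> F)
  (ell : F) (V : lmodType F) (vac : V) (Y : V -> int -> V -> V) (iota : h -> V) : Prop :=
  [/\ is_vertex_algebra vac Y,
      (forall u : h, iota u = Y (iota u) (-1) vac),
      heis_module form ell (fun u n => Y (iota u) n) &
      induced_universal form ell (fun u n => Y (iota u) n) vac].

(* membership in J(ell, lambda): the hhat-submodule generated by the listed vectors *)
Definition in_J (F : fieldType) (h : vectType F) (p : nat) (lam : nat -> h -> F)
  (V : lmodType F) (vac : V) (act : h -> int -> V -> V) (x : V) : Prop :=
  forall P : V -> Prop,
    P 0 -> (forall (a : F) (y z : V), P y -> P z -> P (a *: y + z)) ->
    (forall (u : h) (m : nat), (0 < m)%N ->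
        P (iter p (act u (- (m%:Z))) vac - (lam m u) ^+ p *: vac)) ->
    (forall (u : h) (n : nat), (0 < n)%N -> (p %| n)%N ->
        P (act u (- (n%:Z)) vac - lam n u *: vac)) ->
    (forall (u : h) (n : int) (y : V), P y -> P (act u n y)) ->
    P x.

Definition is_va_quotient (F : fieldType) (V L : lmodType F) (vac : V)
  (Y : V -> int -> V -> V) (vacL : L) (YL : L -> int -> L -> L) (pi : V -> L)
  (J : V -> Prop) : Prop :=
  is_vertex_algebra vacL YL /\
  (forall (a : F) (x y : V), pi (a *: x + y) = a *: pi x + pi y) /\
  (forall z : L, exists x : V, pi x = z) /\
  pi vac = vacL /\
  (forall (a : V) (n : int) (b : V), pi (Y a n b) = YL (pi a) n (pi b)) /\
  (forall x : V, pi x = 0 <-> J x).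

From HB Require Import structures.
From mathcomp Require Import all_boot all_order all_algebra.
From mathcomp Require Import boolp classical_sets functions filter.
From mathcomp Require Import zify.
From Stdlib Require Import Lia.
Set Implicit Arguments. Unset Strict Implicit. Unset Printing Implicit Defensive.
Import Order.TTheory GRing.Theory Num.Theory.
Local Open Scope ring_scope.

(** Everything in [J] maps to [0] in [L], so the vertex operators of the
   generators of [J] vanish on [W].  For the generator [u(-ps)1], the identity
   [Y(u_{-j-1}1, x) = (1/j!) (d/dx)^j Y(u, x)] together with
   [C(pr + p - 1, p - 1) = 1 (mod p)] shows that [u(n)] acts as [0] when [p | n].
   For the generator [u(-1)^p 1 - lam_1(u)^p 1], note that [Y(u(-1)^j 1, x)] is
   obtained from the vacuum field by [j] normally ordered products with [u(x)],
   i.e. by iterating [L + R], where [L] multiplies on the left by the creation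
   half of [u(x)] and [R] on the right by its annihilation half.  [L] and [R]
   commute, and so do the modes within each half, so in characteristic [p] the
   [p]-th iterate is [sum_n u(n)^p x^(-p(n+1))]; comparing coefficients with
   [lam_1(u)^p] times the vacuum field gives the statements about [u(n)^p].
   Both halves are truncated to [N] modes, which computes each coefficient on
   each vector exactly once [N] is large. *)

Section LinearMaps.
Variables (R : pzRingType) (U V : lmodType R) (f : U -> V).
Hypothesis f_linear : forall a x y, f (a *: x + y) = a *: f x + f y.

Let fL : {linear U -> V} := HB.pack f (GRing.isLinear.Build R U V _ f f_linear).

Lemma linear_map0 : f 0 = 0. Proof. exact: (raddf0 fL). Qed.
Lemma linear_mapB x y : f (x - y) = f x - f y. Proof. exact: (raddfB fL). Qed.
Lemma linear_mapZ a x : f (a *: x) = a *: f x. Proof. exact: (linearZ_LR fL). Qed.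
Lemma linear_nmod_morphism : nmod_morphism f.
Proof. by split; [exact: (raddf0 fL) | exact: (raddfD fL)]. Qed.

End LinearMaps.

Lemma zbinom0 (m : int) : zbinom m 0 = 1.
Proof. by case: m => n /=; rewrite ?bin0 // expr0 mul1r. Qed.

Lemma zbinom0S (i : nat) : zbinom 0 i.+1 = 0.
Proof. by []. Qed.

Lemma zbinom1 (m : int) : zbinom m 1 = m.
Proof. by case: m => n /=; rewrite ?bin1 // expr1 NegzE addn1 mulN1r. Qed.

Lemma signr_zbinomN (R : pzRingType) (j i : nat) :
  ((-1) ^+ i * zbinom (Negz j) i)%:~R = 'C(j + i, i)%:R :> R.
Proof. by rewrite /zbinom mulrA -exprMn mulrNN mulr1 expr1n mul1r addnC. Qed.

Lemma sum_if_eqz (X : zmodType) (M : nat) (a : int) (f : nat -> X) :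
  \sum_(i < M) (if i%:Z == a then f i else 0)
  = if (0 <= a) && (a < M%:Z) then f (absz a) else 0.
Proof.
case: a => [a|a] /=; last by rewrite big1 // => i _; rewrite NegzE.
under eq_bigr do rewrite eqz_nat.
by rewrite -big_mkcond (big_ord1_eq _ f) ltz_nat.
Qed.

Lemma pchar_bin_pred (R : nzRingType) (p r : nat) : prime p -> p \in [pchar R] ->
  ('C(p * r + p.-1, p.-1))%:R = 1 :> R.
Proof.
move=> p_prime pcharRp; elim: r => [|r IHr]; first by rewrite muln0 add0n binn.
rewrite mulnS -addnA -binomial.Vandermonde natr_sum big_ord_recl subn0 bin0 mul1n IHr.
rewrite big1 ?addr0 // => i _; rewrite natrM bin_lt_pcharf_0 ?mul0r //.
by rewrite lift0 /= (leq_ltn_trans (ltn_ord i)) // prednK ?prime_gt0.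
Qed.

(** * Commuting additive maps in characteristic [p] *)

Section CommutingAdditiveMaps.
Variable M : zmodType.
Implicit Types f g : M -> M.

Lemma nmod_morphism_sumMn f : nmod_morphism f ->
  forall n (a : 'I_n -> M) (c : 'I_n -> nat),
  f (\sum_(t < n) a t *+ c t) = \sum_(t < n) f (a t) *+ c t.
Proof.
move=> fM n a c.
pose fA : {additive M -> M} := HB.pack f (GRing.isNmodMorphism.Build M M f fM).
exact: etrans (raddf_sum fA _ _ _) (eq_bigr _ (fun t _ => raddfMn fA _ _)).
Qed.

Lemma nmod_morphism_sum (N : nat) (fs : nat -> M -> M) :
  (forall m, nmod_morphism (fs m)) -> nmod_morphism (fun y => \sum_(m < N) fs m y).
Proof.
move=> fsM; split=> [|y z]; first by rewrite big1 // => m _; rewrite (fsM m).1.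
by rewrite -big_split; apply: eq_bigr => m _; rewrite (fsM m).2.
Qed.

Lemma iter_add_binomial f g : nmod_morphism f -> nmod_morphism g ->
    (forall x, f (g x) = g (f x)) ->
  forall k x, iter k (fun y => f y + g y) x
              = \sum_(t < k.+1) iter t f (iter (k - t)%N g x) *+ 'C(k, t).
Proof.
move=> fM gM fg.
have gfX t y : g (iter t f y) = iter t f (g y) by elim: t => //= t <-; rewrite fg.
elim=> [|k IHk] x; first by rewrite big_ord1 /= mulr1n.
set a := fun t => iter t f (iter (k.+1 - t)%N g x).
rewrite iterS IHk /= (nmod_morphism_sumMn fM) (nmod_morphism_sumMn gM).
have fa t : f (iter t f (iter (k - t)%N g x)) = a t.+1 by [].
have ga (t : 'I_k.+1) : g (iter t f (iter (k - t)%N g x)) = a t.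
  by rewrite gfX /a subSn // -ltnS.
under [X in X + _]eq_bigr do rewrite fa.
under [X in _ + X]eq_bigr => t _ do rewrite ga.
rewrite [RHS]big_ord_recl [X in _ + X]big_ord_recl /= !bin0 !mulr1n addrCA.
congr (_ + _); rewrite [RHS](eq_bigr (fun t : 'I_k.+1 =>
  a t.+1 *+ 'C(k, t) + a t.+1 *+ 'C(k, t.+1))); last first.
  by move=> t _; rewrite /bump /= binS mulrnDr addrC.
rewrite big_split /= [X in _ = _ + X]big_ord_recr /= bin_small // mulr0n addr0.
by congr (_ + _); apply: eq_bigr.
Qed.

Variable p : nat.
Hypotheses (p_prime : prime p) (M_pchar : forall x : M, x *+ p = 0).

Lemma iter_add_pchar f g : nmod_morphism f -> nmod_morphism g ->
    (forall x, f (g x) = g (f x)) ->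
  forall x, iter p (fun y => f y + g y) x = iter p f x + iter p g x.
Proof.
move=> fM gM fg x.
have max_neq0 : ord_max != ord0 :> 'I_p.+1.
  by rewrite -(inj_eq val_inj) /= -lt0n prime_gt0.
rewrite iter_add_binomial // (bigD1 ord0) // (bigD1 ord_max) //=.
rewrite big1 => [|t /andP[t_neq0 t_neqp]].
  by rewrite subn0 subnn bin0 binn !mulr1n addr0 addrC.
have t_range : (0 < t < p)%N.
  move: t_neq0 t_neqp; rewrite -!(inj_eq val_inj) /= lt0n => -> /=.
  by rewrite ltn_neqAle -ltnS ltn_ord andbT.
by rewrite -(divnK (prime_dvd_bin p_prime t_range)) mulrnA M_pchar.
Qed.

Lemma iter_sum_pchar (N : nat) (fs : nat -> M -> M) :
    (forall m, nmod_morphism (fs m)) ->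
    (forall m m' x, fs m (fs m' x) = fs m' (fs m x)) ->
  forall x, iter p (fun y => \sum_(m < N) fs m y) x = \sum_(m < N) iter p (fs m) x.
Proof.
move=> fsM fsC; elim: N => [|N IHN] x.
  by rewrite big_ord0 -(prednK (prime_gt0 p_prime)) /= big_ord0.
rewrite big_ord_recr /= -IHN -iter_add_pchar //.
- by apply: eq_iter => y; rewrite big_ord_recr.
- exact: nmod_morphism_sum.
- move=> y; rewrite (big_morph (fs N) (fsM N).2 (fsM N).1).
  by apply: eq_bigr => m _; rewrite fsC.
Qed.

End CommutingAdditiveMaps.

(** * Truncated normally ordered products *)

Section NormalProduct.
Variables (W : zmodType) (A : int -> W -> W).
Hypothesis A_morph : forall n, nmod_morphism (A n).

Definition vacuum_field : int -> W -> W := fun q w => if q == -1 then w else 0.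

Definition creation (i : nat) (G : int -> W -> W) : int -> W -> W :=
  fun q w => A (-1 - i%:Z) (G (q + i%:Z) w).

Definition annihilation (m : nat) (G : int -> W -> W) : int -> W -> W :=
  fun q w => G (q - 1 - m%:Z) (A m w).

(* The modes of the normally ordered product [:a(x) G(x):], where
   [a(x) = sum_n A n x^(-n-1)], keeping the [N] lowest terms of each half. *)
Definition normal_product (N : nat) (G : int -> W -> W) : int -> W -> W :=
  \sum_(i < N) creation i G + \sum_(m < N) annihilation m G.

Lemma normal_productE N G q w : normal_product N G q w =
  \sum_(i < N) A (-1 - i%:Z) (G (q + i%:Z) w) + \sum_(m < N) G (q - 1 - m%:Z) (A m w).
Proof. by rewrite /normal_product addrfctE /= !fct_sumE addrfctE. Qed.

Lemma creation_morph i : nmod_morphism (creation i).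
Proof.
split=> [|G H]; apply/funext => q; apply/funext => w; rewrite /creation /=.
  exact: (A_morph _).1.
exact: (A_morph _).2.
Qed.

Lemma annihilation_morph m : nmod_morphism (annihilation m).
Proof. by []. Qed.

Lemma creation_annihilationC i m G :
  creation i (annihilation m G) = annihilation m (creation i G).
Proof.
apply/funext => q; apply/funext => w; rewrite /creation /annihilation.
by congr (A _ (G _ _)); lia.
Qed.

Lemma iter_creation_vacuum i k q w :
  iter k (creation i) vacuum_field q w
  = if q + (k * i)%:Z == -1 then iter k (A (-1 - i%:Z)) w else 0.
Proof.
elim: k q => [|k IHk] q; first by rewrite mul0n addr0.
rewrite iterS /creation IHk -addrA -PoszD -mulSn.
by case: ifP => _ //; rewrite (A_morph _).1.
Qed.

Lemma iter_annihilation_vacuum m k q w :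
  iter k (annihilation m) vacuum_field q w
  = if q == (k * m.+1)%:Z - 1 then iter k (A m) w else 0.
Proof.
elim: k q w => [|k IHk] q w; first by rewrite sub0r.
rewrite iterS /annihilation IHk iterSr; congr (if _ then _ else _).
by apply/eqP/eqP; rewrite mulSn PoszD; lia.
Qed.

Hypothesis A_trunc : forall w, exists N : int, forall n, N <= n -> A n w = 0.

Lemma iter_normal_product_vacuum0 N j q :
  iter j (normal_product N) vacuum_field q 0 = 0.
Proof.
elim: j q => [|j IHj] q; first by rewrite /vacuum_field /= if_same.
rewrite iterS normal_productE !big1 ?addr0 // => i _.
  by rewrite (A_morph _).1 IHj.
by rewrite IHj (A_morph _).1.
Qed.

Lemma normal_product_stable G q w K :
    (forall q', G q' 0 = 0) -> (forall i : nat, (K <= i)%N -> G (q + i%:Z) w = 0) ->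
    (forall m : nat, (K <= m)%N -> A m w = 0) ->
  forall N, (K <= N)%N -> normal_product N G q w = normal_product K G q w.
Proof.
move=> G0 G_trunc Aw_trunc N KN; rewrite !normal_productE.
rewrite (big_ord_widen _ (fun i => A (-1 - i%:Z) (G (q + i%:Z) w)) KN).
rewrite (big_ord_widen _ (fun m => G (q - 1 - m%:Z) (A m w)) KN).
by congr (_ + _); rewrite [RHS]big_mkcond; apply: eq_bigr => i _; case: ltnP => // Ki;
  rewrite ?G_trunc ?(A_morph _).1 ?Aw_trunc.
Qed.

(* [B j] stands for the field of [a(-1)^j 1]; its successor is the normal
   product with [a(x)], up to truncation. *)
Section Approximation.
Variable B : nat -> int -> W -> W.
Hypothesis B0 : forall q w, B 0 q w = vacuum_field q w.
Hypothesis B_zero : forall j q, B j q 0 = 0.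
Hypothesis B_trunc : forall j w, exists c : int, forall q, c <= q -> B j q w = 0.
Hypothesis B_succ : forall j q w,
  \forall N \near \oo%classic, B j.+1 q w = normal_product N (B j) q w.

(* One [N] serves all [q >= q0]: this is what the induction below needs. *)
Lemma normal_product_succ_uniform j w q0 : \forall N \near \oo%classic,
  forall q, q0 <= q -> B j.+1 q w = normal_product N (B j) q w.
Proof.
have [c Bc] := B_trunc j w; have [NA hA] := A_trunc w.
set K := maxn (absz (c - q0)) (absz NA).
exists K => // N /= KN q q0q.
have [M0 _ hM0] := B_succ j q w.
have BK (i : nat) : (K <= i)%N -> B j (q + i%:Z) w = 0.
  by move=> Ki; apply: Bc; move: Ki; rewrite /K; lia.
have AK (m : nat) : (K <= m)%N -> A m w = 0.
  by move=> Km; apply: hA; move: Km; rewrite /K; lia.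
have stable := normal_product_stable (B_zero j) BK AK.
rewrite (hM0 (maxn M0 N)); last exact: leq_maxl.
by rewrite [LHS]stable ?[RHS]stable // (leq_trans KN) ?leq_maxr.
Qed.

Lemma normal_product_approx j w q0 : \forall N \near \oo%classic,
  forall q, q0 <= q -> iter j (normal_product N) vacuum_field q w = B j q w.
Proof.
elim: j w q0 => [|j IHj] w q0; first by apply: nearW => N q _; rewrite B0.
have [NA hA] := A_trunc w; set K := absz NA.
have [N1 _ IHw] := IHj w q0.
have [N2 _ IHm] := filter_forall _ (fun m : 'I_K => IHj (A m w) (q0 - 1 - K%:Z)).
have [N3 _ Bsucc] := normal_product_succ_uniform j w q0.
exists (maxn N1 (maxn N2 N3)) => // N /=; rewrite !geq_max => /and3P[N1N N2N N3N] q q0q.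
rewrite (Bsucc N N3N) // !normal_productE; congr (_ + _); apply: eq_bigr => i _.
  by rewrite (IHw N N1N) //; lia.
case: (ltnP i K) => [iK|Ki].
  by rewrite (IHm N N2N (Ordinal iK)) //=; lia.
by rewrite hA ?iter_normal_product_vacuum0 ?B_zero //; move: Ki; rewrite /K; lia.
Qed.

End Approximation.

Hypothesis A_commute : forall (m n : int) w, m + n != 0 -> A m (A n w) = A n (A m w).

Lemma creationC i i' G : creation i (creation i' G) = creation i' (creation i G).
Proof.
apply/funext => q; apply/funext => w; rewrite /creation A_commute; last by lia.
by rewrite addrAC.
Qed.

Lemma annihilationC m m' G :
  annihilation m (annihilation m' G) = annihilation m' (annihilation m G).
Proof.
apply/funext => q; apply/funext => w; rewrite /annihilation.
have [mm'0|mm'_neq0] := eqVneq (m%:Z + m'%:Z) 0.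
  by have [-> ->] : m = 0%N /\ m' = 0%N by lia.
rewrite A_commute 1?addrC //; congr (G _ _); lia.
Qed.

Variable p : nat.
Hypotheses (p_prime : prime p) (W_pchar : forall w : W, w *+ p = 0).

Lemma iter_normal_product_vacuum_pchar N (n : int) w : (`|n| < N)%N ->
  iter p (normal_product N) vacuum_field (p%:Z * (n + 1) - 1) w = iter p (A n) w.
Proof.
move=> n_small.
have p_gt0 := prime_gt0 p_prime.
have fields_pchar (G : int -> W -> W) : G *+ p = 0.
  by apply/funext => q'; apply/funext => w'; rewrite !natmulfctE W_pchar.
rewrite /normal_product (iter_add_pchar p_prime fields_pchar); first last.
- move=> G /=.
  under eq_bigr do rewrite (big_morph _ (creation_morph _).2 (creation_morph _).1).
  under [RHS]eq_bigr do
    rewrite (big_morph _ (annihilation_morph _).2 (annihilation_morph _).1).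
  rewrite exchange_big; apply: eq_bigr => m _; apply: eq_bigr => i _.
  exact: creation_annihilationC.
- exact/nmod_morphism_sum/annihilation_morph.
- exact/nmod_morphism_sum/creation_morph.
rewrite !iter_sum_pchar //;
  [|exact: annihilationC | exact: creation_morph | exact: creationC].
rewrite addrfctE /= !fct_sumE addrfctE /=.
under eq_bigr do rewrite iter_creation_vacuum.
under [X in _ + X]eq_bigr do rewrite iter_annihilation_vacuum.
case: n n_small => n0 /= n0_small; rewrite ?NegzE.
- have cond (i : nat) : (p%:Z * (n0%:Z + 1) - 1 == (p * i.+1)%:Z - 1) = (i == n0).
    by apply/eqP/eqP => [|->]; nia.
  under [X in _ + X]eq_bigr do rewrite cond.
  rewrite big1 ?add0r => [|i _]; last by rewrite ifF //; apply/negbTE/eqP; nia.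
  by rewrite -big_mkcond (big_ord1_eq _ (fun i => iter p (A i%:Z) w)) n0_small.
- have cond (i : nat) : (p%:Z * (- n0.+1%:Z + 1) - 1 + (p * i)%:Z == -1) = (i == n0).
    by apply/eqP/eqP => [|->]; nia.
  under eq_bigr do rewrite cond.
  rewrite [X in _ + X]big1 ?addr0 => [|i _]; last first.
    by rewrite ifF //; apply/negbTE/eqP; nia.
  rewrite -big_mkcond (big_ord1_eq _ (fun i => iter p (A (-1 - i%:Z)) w)) ltnW //.
  by congr (iter _ (A _) _); lia.
Qed.

End NormalProduct.

(** * Consequences of the Jacobi identity *)

Section ModuleJacobi.
Variables (F : fieldType) (V W : lmodType F) (YV : V -> int -> V -> V).
Variable YW : V -> int -> W -> W.
Hypothesis jacW : jacobi YV YW.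

Lemma jacobi_commutator u v w m n : \forall M \near \oo%classic,
  YW u m (YW v n w) - YW v n (YW u m w)
  = \sum_(i < M) (zbinom m i)%:~R *: YW (YV u i%:Z v) (m + n - i%:Z) w.
Proof.
have [N hN] := jacW u v w m n 0; exists N.+1 => // -[//|M] /= NM.
move: (hN M.+1 (ltnW NM)); rewrite (eq_bigr (fun i : 'I_M.+1 =>
  (zbinom m i)%:~R *: YW (YV u i%:Z v) (m + n - i%:Z) w)) => [->|i _]; last first.
  by rewrite add0r.
rewrite big_ord_recl big1 => [|i _]; last by rewrite lift0 zbinom0S mulr0 scale0r.
by rewrite /= expr0 bin0 mul1r scale1r !addr0 expr0z scale1r.
Qed.

Lemma jacobi_normal_product u v w n : \forall M \near \oo%classic,
  YW (YV u (-1) v) n w = normal_product (YW u) M (YW v) n w.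
Proof.
have [N hN] := jacW u v w 0 n (-1); exists N.+1 => // -[//|M] /= NM.
move: (hN M.+1 (ltnW NM)).
rewrite big_ord_recl big1 => [|i _]; last by rewrite lift0 zbinom0S scale0r.
rewrite zbinom0 scale1r addr0 add0r subr0 addr0 => ->.
rewrite normal_productE -big_split /=; apply: eq_bigr => i _.
have sign_sq : ((-1) ^+ i * (zbinom (-1) i)%:~R : F) = 1.
  by rewrite -intr_sign -intrM (signr_zbinomN _ 0) binn.
have inv_m1 : ((-1) ^ (-1) : F) = -1 by rewrite /exprz /= expr1 invrN1.
rewrite sign_sq scale1r inv_m1 scaleN1r opprK add0r.
by congr (YW _ _ _ + YW _ _ _); lia.
Qed.

Variable vac : V.
Hypotheses (YW_linear : va_linear YW) (YW_vacuum : va_vacuum vac YW).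

(* [Y(u_{-j-1} 1, x)] is the [j]-th divided derivative of [Y(u, x)]. *)
Lemma jacobi_vacuum_descendant u w j n :
  YW (YV u (Negz j) vac) n w = ((-1) ^+ j * zbinom n j)%:~R *: YW u (n - j%:Z) w.
Proof.
have YWu0 k : YW u k 0 = 0 by apply: linear_map0; exact: YW_linear.2.
have [N hN] := jacW u vac w 0 n (Negz j); set M := (N + absz n).+1.
move: (hN M (leq_trans (leq_addr _ _) (leqnSn _))); set s : F := (-1) ^ Negz j.
rewrite big_ord_recl big1 => [|i _]; last by rewrite lift0 zbinom0S scale0r.
rewrite zbinom0 scale1r addr0 add0r subr0 addr0 => ->.
have term (i : nat) : YW u (0 + Negz j - i%:Z) (YW vac (n + i%:Z) w)
      - s *: YW vac (n + Negz j - i%:Z) (YW u (0 + i%:Z) w)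
    = (if i%:Z == -1 - n then YW u (Negz j - i%:Z) w else 0)
      - (if i%:Z == n - j%:Z then s *: YW u i w else 0).
  have cond1 : (n + i%:Z == -1) = (i%:Z == -1 - n) by apply/eqP/eqP; lia.
  have cond2 : (n + Negz j - i%:Z == -1) = (i%:Z == n - j%:Z) by apply/eqP/eqP; lia.
  rewrite !YW_vacuum !add0r cond1 cond2 (fun_if (YW u _)) YWu0.
  by rewrite (fun_if (fun x => s *: x)) scaler0.
under eq_bigr do rewrite term scalerBr !(fun_if (fun x => _ *: x)) !scaler0.
pose c (i : nat) : F := (-1) ^+ i * (zbinom (Negz j) i)%:~R.
rewrite sumrB (sum_if_eqz _ _ (fun i => c i *: YW u (Negz j - i%:Z) w)).
rewrite (sum_if_eqz _ _ (fun i => c i *: (s *: YW u i%:Z w))).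
have c_eq i : c i = ('C(j + i, i))%:R by rewrite /c -intr_sign -intrM signr_zbinomN.
have s_eq : s = (-1) ^+ j.+1 by rewrite -invr_sign.
clear hN term; case: n @M => [m|t] M.
- rewrite ifF ?sub0r; last by apply/negbTE; lia.
  case: (leqP j m) => [jm|mj]; last first.
    rewrite ifF; last by apply/negbTE; lia.
    by rewrite /zbinom bin_small // mulr0 scale0r oppr0.
  rewrite ifT; last by lia.
  have -> : `|m%:Z - j%:Z|%N = (m - j)%N by lia.
  rewrite c_eq s_eq subnKC // bin_sub // scalerA -scaleNr -subzn //.
  by rewrite rmorphM rmorphXn rmorphN1 exprS mulN1r mulrN opprK mulrC.
- rewrite ifT; last by lia.
  rewrite [X in _ - X]ifF ?subr0; last by apply/negbTE; lia.
  have -> : `|(-1 - Negz t)%R|%N = t by lia.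
  rewrite c_eq signr_zbinomN -{2}(addKn j t) bin_sub ?leq_addr // addnC.
  by congr (_ *: YW _ _ _); lia.
Qed.

End ModuleJacobi.

(** * Modules over the quotient [L] *)

Section HeisenbergQuotientModule.
Variables (F : fieldType) (p : nat) (h : vectType F) (form : h -> h -> F).
Variables (ell : F) (lam : nat -> h -> F).
Variables (V : lmodType F) (vac : V) (Y : V -> int -> V -> V) (iota : h -> V).
Variables (L : lmodType F) (vacL : L) (YL : L -> int -> L -> L) (pi : V -> L).
Variables (W : lmodType F) (YW : L -> int -> W -> W).
Hypothesis hV : is_heisenberg_VA form ell vac Y iota.
Hypothesis hL : is_va_quotient vac Y vacL YL pi
  (in_J p lam vac (fun u n => Y (iota u) n)).
Hypothesis hW : is_va_module vacL YL YW.

Local Notation act u := (YW (pi (iota u))).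

Lemma heis_mode_on_generator u v (i : nat) :
  Y (iota u) i (iota v) = (if i == 1%N then form u v * ell else 0) *: vac.
Proof.
case: hV => [[[_ Y_lin] _ _ Y_cre _] Y_iota [_ _ Y_comm] _].
move: (Y_comm u v i (-1) vac); rewrite -Y_iota (Y_cre _).2 //.
rewrite (linear_map0 (Y_lin _ _)) subr0 => ->; congr (_ *: _).
have [->|i_neq1] := eqVneq i 1%N; first by rewrite mul1r.
by rewrite ifF //; apply/negbTE; lia.
Qed.

Lemma act_heis_module : heis_module form ell (fun u n => act u n).
Proof.
case: hV => _ Y_iota [Yu_lin _ _] _.
case: hL => _ [pi_lin [_ [pi_vac [pi_hom _]]]].
case: hW => [[YW_lin1 YW_lin2] _ YW_vac YW_jac].
split=> [a u v n w|//|u v m n w].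
  by rewrite Y_iota Yu_lin -!Y_iota pi_lin YW_lin1.
have [M0 _ hM] := jacobi_commutator YW_jac (pi (iota u)) (pi (iota v)) w m n.
rewrite (hM (maxn M0 2)); last exact: leq_maxl.
under eq_bigr => i _ do rewrite -pi_hom heis_mode_on_generator (linear_mapZ pi_lin)
  pi_vac (linear_mapZ (fun a x y => YW_lin1 a x y _ _)) YW_vac.
rewrite (bigD1 (Ordinal (leq_maxr M0 2))) // big1 /= => [|i i_neq1]; last first.
  by rewrite -(inj_eq val_inj) /= in i_neq1; rewrite (negbTE i_neq1) scale0r scaler0.
have -> : (m + n - 1 == -1) = (m + n == 0) by apply/eqP/eqP; lia.
by rewrite zbinom1 addr0; case: (m + n == 0); rewrite ?scalerA ?mulrA ?scaler0 ?scale0r.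
Qed.

Lemma act_commute u m n w : m + n != 0 -> act u m (act u n w) = act u n (act u m w).
Proof.
case: act_heis_module => _ _ comm mn_neq0; apply/eqP; rewrite -subr_eq0 comm.
by rewrite ifN // scale0r.
Qed.

Hypotheses (p_prime : prime p) (pcharFp : p \in [pchar F]).
Hypothesis lam_ge2 : forall (n : nat) (u : h), (2 <= n)%N -> lam n u = 0.

Lemma quotient_vacuum_mode_mulp u (s : nat) : (0 < s)%N ->
  YL (pi (iota u)) (- (p * s)%N%:Z) vacL = 0.
Proof.
case: hL => _ [pi_lin [_ [pi_vac [pi_hom pi_ker]]]] s_gt0.
have /pi_ker : in_J p lam vac (fun u n => Y (iota u) n)
    (Y (iota u) (- (p * s)%N%:Z) vac - lam (p * s)%N u *: vac).
  move=> P _ _ _ P_dvd _; apply: P_dvd; last exact: dvdn_mulr.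
  by rewrite muln_gt0 prime_gt0.
rewrite lam_ge2; last by rewrite (leq_trans (prime_gt1 p_prime)) ?leq_pmulr.
by rewrite scale0r subr0 pi_hom pi_vac.
Qed.

Lemma act_vanish_dvd u n w : (p%:Z %| n)%Z -> act u n w = 0.
Proof.
case: hW => [[YW_lin1 YW_lin2] _ YW_vac YW_jac].
have descendant := jacobi_vacuum_descendant YW_jac (conj YW_lin1 YW_lin2) YW_vac.
have YW0 k : YW 0 k w = 0 by apply: (linear_map0 (fun a x y => YW_lin1 a x y _ _)).
have p_gt0 := prime_gt0 p_prime.
rewrite dvdzE; case: n => [m|t] /= /dvdnP[r r_def]; [rewrite r_def|].
- have /eqP := descendant (pi (iota u)) w p.-1 (r * p + p.-1)%N.
  have -> : Negz p.-1 = - (p * 1)%N%:Z by rewrite NegzE muln1 prednK.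
  rewrite quotient_vacuum_mode_mulp // YW0 eq_sym scaler_eq0 => /orP[coef0|/eqP].
    have bin1 : ('C(r * p + p.-1, p.-1)%:Z)%:~R = 1 :> F.
      by rewrite mulnC; exact: pchar_bin_pred.
    by move: coef0; rewrite /zbinom intrM intr_sign bin1 mulr1 signr_eq0.
  by have -> : (r * p + p.-1)%N%:Z - p.-1%:Z = (r * p)%N by lia.
- have r_gt0 : (0 < r)%N by case: r r_def.
  have Negz_t : Negz t = - (p * r)%N%:Z by rewrite NegzE r_def mulnC.
  move: (descendant (pi (iota u)) w t (-1)).
  rewrite (signr_zbinomN _ 0) binn scale1r.
  rewrite (_ : -1 - t%:Z = Negz t); last by rewrite NegzE; lia.
  by rewrite Negz_t quotient_vacuum_mode_mulp // YW0 => <-.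
Qed.

Lemma act_pow u n w :
  iter p (act u n) w = lam 1%N u ^+ p *: (if n == -1 then w else 0).
Proof.
case: hL => _ [pi_lin [_ [pi_vac [pi_hom pi_ker]]]].
case: hW => [[YW_lin1 YW_lin2] YW_trunc YW_vac YW_jac].
pose v j := iter j (Y (iota u) (-1)) vac.
pose B j := YW (pi (v j)).
have A_morph k : nmod_morphism (act u k).
  exact: linear_nmod_morphism (YW_lin2 (pi (iota u)) k).
have B0 q w' : B 0%N q w' = vacuum_field q w' by rewrite /B /v /= pi_vac YW_vac.
have B_zero j q : B j q 0 = 0 := linear_map0 (YW_lin2 (pi (v j)) q).
have B_succ j q w' : \forall N \near \oo%classic,
    B j.+1 q w' = normal_product (act u) N (B j) q w'.
  by rewrite /B /v iterS pi_hom; exact: (jacobi_normal_product YW_jac).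
have W_pchar (x : W) : x *+ p = 0 by rewrite -scaler_nat (pcharf0 pcharFp) scale0r.
have [N0 _ approx] := normal_product_approx A_morph (YW_trunc _) B0 B_zero
  (fun j => YW_trunc (pi (v j))) B_succ p w (p%:Z * (n + 1) - 1).
move: (approx (maxn N0 (absz n).+1) (leq_maxl _ _) _ (lexx _)).
rewrite iter_normal_product_vacuum_pchar //;
  [move=> -> | exact: act_commute | exact: leq_maxr].
have /pi_ker : in_J p lam vac (fun u n => Y (iota u) n) (v p - lam 1%N u ^+ p *: vac).
  by move=> P _ _ P_pow _ _; exact: P_pow.
rewrite (linear_mapB pi_lin) (linear_mapZ pi_lin) pi_vac.
move=> /eqP; rewrite subr_eq0 => /eqP vp.
rewrite /B vp (linear_mapZ (fun a x y => YW_lin1 a x y _ _)) YW_vac.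
have p_gt0 := prime_gt0 p_prime.
by have -> : (p%:Z * (n + 1) - 1 == -1) = (n == -1) by apply/eqP/eqP; nia.
Qed.

End HeisenbergQuotientModule.

Theorem proposition5
  (F : fieldType) (p : nat) (hp : prime p) (hchar : p \in [pchar F])
  (h : vectType F) (form : h -> h -> F) (hform : nondeg_symform form)
  (ell : F)
  (lam : nat -> h -> F)
  (hlam : forall (n : nat) (a : F) (u v : h), (0 < n)%N ->
            lam n (a *: u + v) = a * lam n u + lam n v)
  (hLam : forall (n : nat) (u : h), (2 <= n)%N -> lam n u = 0)
  (V : lmodType F) (vac : V) (Y : V -> int -> V -> V) (iota : h -> V)
  (hV : is_heisenberg_VA form ell vac Y iota)
  (L : lmodType F) (vacL : L) (YL : L -> int -> L -> L) (pi : V -> L)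
  (hL : is_va_quotient vac Y vacL YL pi
          (in_J p lam vac (fun u n => Y (iota u) n)))
  (W : lmodType F) (YW : L -> int -> W -> W) (hW : is_va_module vacL YL YW) :
  let act := fun (u : h) (n : int) => YW (pi (iota u)) n in
  [/\ heis_module form ell act,
      restricted act,
      (forall (u : h) (n : int) (w : W), (p%:Z %| n)%Z -> act u n w = 0),
      (forall (u : h) (n : int) (w : W), n != -1 -> iter p (act u n) w = 0) &
      (forall (u : h) (w : W), iter p (act u (-1)) w = (lam 1%N u) ^+ p *: w)].
Proof.
move=> act; rewrite {}/act; have [_ YW_trunc _ _] := hW.
have act_pow := act_pow hV hL hW hp hchar.
split=> [|u w|u n w|u n w n_neq|u w].
- exact: act_heis_module hV hL hW.
- exact: YW_trunc.
- move=> p_dvd_n; exact: act_vanish_dvd hL hW hp hchar hLam u n w p_dvd_n.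
- by rewrite act_pow (negbTE n_neq) scaler0.
- by rewrite act_pow eqxx.
Qed.
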